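(* Let $\lambda>0$ be a constant and $\mu(t,x,y)$ a $C^\infty$ function on an open set $V\subset\mathbb{R}^3$, and let $U\subset V$ be a connected open set on which $\mu\neq\lambda$. On $U$ define the Riemannian metric $$g = (\lambda-\mu(t,x,y))^{-2}\,dt^2 + \lambda\,dx^2 + \lambda\,dy^2$$ and the $(1,1)$ tensor $A$ by $A(\partial_t)=\mu(t,x,y)\,\partial_t$, $A(\partial_x)=\lambda\,\partial_x$, $A(\partial_y)=\lambda\,\partial_y$. Then $A$ is a Codazzi tensor for $g$.
   Context: A symmetric $(1,1)$ tensor $A$ (self-adjoint with respect to $g$) is a Codazzi tensor if $(\nabla_X A)Y = (\nabla_Y A)X$ for all vector fields $X,Y$, where $\nabla$ is the Levi-Civita connection of $g$. *)

From HB Require Import structures.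
From mathcomp Require Import all_boot all_order all_algebra.
From mathcomp Require Import all_classical all_reals all_analysis.
Set Implicit Arguments. Unset Strict Implicit. Unset Printing Implicit Defensive.
Import Order.TTheory GRing.Theory Num.Theory.
Import numFieldNormedType.Exports.
Local Open Scope classical_set_scope.
Local Open Scope ring_scope.

Section Coords.
Variables (R : realType) (n : nat).

Definition coord_vec (i : 'I_n) : 'rV[R]_n := delta_mx 0 i.

Definition partial (i : 'I_n) (f : 'rV[R]_n -> R) (p : 'rV[R]_n) : R :=
  'D_(coord_vec i) f p.

Fixpoint Ck_on (k : nat) (V : set 'rV[R]_n) (f : 'rV[R]_n -> R) : Prop :=
  match k with
  | 0 => forall p, V p -> {for p, continuous f}
  | k'.+1 => (forall p, V p -> differentiable f p) /\
             (forall i : 'I_n, Ck_on k' V (partial i f))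
  end.

Definition smooth_on (V : set 'rV[R]_n) (f : 'rV[R]_n -> R) : Prop :=
  forall k, Ck_on k V f.

(* A metric is given by its coefficient matrix g p i j = g_ij(p) = g(d_i, d_j).
   A (1,1) tensor field A is given by A p k j = A^k_j(p), i.e.
   A(d_j) = sum_k A^k_j d_k. *)

Definition christoffel (g : 'rV[R]_n -> 'M[R]_n) (k i j : 'I_n) (p : 'rV[R]_n)
  : R :=
  2^-1 * \sum_(l < n) (invmx (g p)) k l *
    (partial i (fun q => g q j l) p + partial j (fun q => g q i l) p
     - partial l (fun q => g q i j) p).

(* Components of the covariant derivative of a (1,1) tensor:
   (nabla_i A)^k_j = d_i A^k_j + Gamma^k_il A^l_j - Gamma^l_ij A^k_l,
   so that ((nabla_X A) Y)^k = X^i Y^j (nabla_i A)^k_j. *)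
Definition cov_deriv (g : 'rV[R]_n -> 'M[R]_n) (A : 'rV[R]_n -> 'M[R]_n)
  (i k j : 'I_n) (p : 'rV[R]_n) : R :=
  partial i (fun q => A q k j) p
  + \sum_(l < n) christoffel g k i l p * A p l j
  - \sum_(l < n) christoffel g l i j p * A p k l.

Definition self_adjoint_on (U : set 'rV[R]_n) (g A : 'rV[R]_n -> 'M[R]_n)
  : Prop :=
  forall p, U p -> (A p)^T *m g p = g p *m A p.

Definition codazzi_on (U : set 'rV[R]_n) (g A : 'rV[R]_n -> 'M[R]_n) : Prop :=
  self_adjoint_on U g A /\
  forall p, U p -> forall i j k : 'I_n, cov_deriv g A i k j p = cov_deriv g A j k i p.

End Coords.

(* The metric g = (lam - mu)^-2 dt^2 + lam dx^2 + lam dy^2 on R^3,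
   coordinates (t, x, y) = indices (0, 1, 2). *)
Definition metric4p1 (R : realType) (lam : R) (mu : 'rV[R]_3 -> R) (p : 'rV[R]_3)
  : 'M[R]_3 :=
  diag_mx (\row_(i < 3) if i == 0 :> nat then (lam - mu p) ^- 2 else lam).

Definition tensor4p1 (R : realType) (lam : R) (mu : 'rV[R]_3 -> R) (p : 'rV[R]_3)
  : 'M[R]_3 :=
  diag_mx (\row_(i < 3) if i == 0 :> nat then mu p else lam).

From HB Require Import structures.
From mathcomp Require Import all_boot all_order all_algebra.
From mathcomp Require Import all_classical all_reals all_analysis.
From mathcomp Require Import ring.
Import Order.TTheory GRing.Theory Num.Theory.
Import numFieldNormedType.Exports.
Local Open Scope classical_set_scope.
Local Open Scope ring_scope.

(* In the coordinates (t, x, y) both g = diag(h_i) and A = diag(a_i) are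
   diagonal.  For such a pair the Christoffel symbols with three distinct
   indices vanish and Codazzi's equation reduces, for i <> j, to
   d_i a_j = Gamma^j_ij (a_i - a_j) with Gamma^j_ij = d_i h_j / (2 h_j).
   Here h_x = h_y = a_x = a_y = lam are constant, so only j = t matters, and
   h_t = (lam - mu)^-2 gives d_i h_t / (2 h_t) = d_i mu / (lam - mu), which is
   exactly what the equation requires. *)

Lemma derive_subr_expN2 (R : realType) (V : normedModType R) (c : R)
    (f : V -> R) (p v : V) :
  derivable f p v -> f p != c ->
  'D_v (fun q => (c - f q) ^- 2) p = 2 * (c - f p) ^- 3 * 'D_v f p.
Proof.
move=> df fpc.
have cf0 : c - f p != 0 by rewrite subr_eq0 eq_sym.
have dcf : derivable (cst c - f) p v by apply: derivableB.
have Dcf : 'D_v (cst c - f) p = - 'D_v f p.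
  by rewrite deriveB // derive_cst sub0r.
rewrite (deriveV (f := (cst c - f) ^+ 2)); last 2 first.
- by rewrite exprfctE expf_neq0.
- exact: derivableX.
rewrite deriveX // Dcf exprfctE.
change (- (c - f p) ^+ 2 ^- 2 * (2 * (c - f p) ^+ 1 * - 'D_v f p) =
  2 * (c - f p) ^- 3 * 'D_v f p).
by field.
Qed.

Section DiagonalFields.
Variables (R : realType) (n : nat).

Definition diag_field (d : 'I_n -> 'rV[R]_n -> R) (p : 'rV[R]_n) : 'M[R]_n :=
  diag_mx (\row_i d i p).

Lemma diag_fieldE d p j l : diag_field d p j l = (j == l)%:R * d j p.
Proof. by rewrite !mxE mulr_natl. Qed.

Lemma partial_diag_field d i j l p :
  partial i (fun q => diag_field d q j l) p = (j == l)%:R * partial i (d j) p.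
Proof.
under eq_fun do rewrite diag_fieldE.
have [_|_] := eqVneq j l; last first.
  by under eq_fun do rewrite mul0r; rewrite /partial derive_cst mul0r.
by rewrite mul1r; under eq_fun do rewrite mul1r.
Qed.

Lemma invmx_diag_field h p : (forall k, h k p != 0) ->
  invmx (diag_field h p) = diag_field (fun k q => (h k q)^-1) p.
Proof.
move=> h0; set B := diag_field (fun k q => (h k q)^-1) p.
have hB : diag_field h p *m B = 1%:M.
  apply/matrixP => i j; rewrite mul_diag_mx !mxE.
  by have [_|_] := eqVneq i j; rewrite ?mulr1n ?mulr0n ?mulr0 ?divff.
have [hU _] := mulmx1_unit hB.
by rewrite -[RHS](mulKmx hU) hB mulmx1.
Qed.

Lemma christoffel_diag_field h k i j p : (forall k, h k p != 0) ->
  christoffel (diag_field h) k i j p =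
  2^-1 * (h k p)^-1 * ((j == k)%:R * partial i (h j) p
    + (i == k)%:R * partial j (h i) p - (i == j)%:R * partial k (h i) p).
Proof.
move=> h0; rewrite /christoffel invmx_diag_field // (bigD1 k) //= big1.
  by rewrite diag_fieldE eqxx mul1r !partial_diag_field addr0 mulrA.
by move=> l lk; rewrite diag_fieldE eq_sym (negbTE lk) !mul0r.
Qed.

Lemma cov_deriv_diag_field h a i k j p :
  cov_deriv (diag_field h) (diag_field a) i k j p =
  (k == j)%:R * partial i (a k) p
  + christoffel (diag_field h) k i j p * (a j p - a k p).
Proof.
rewrite /cov_deriv partial_diag_field (bigD1 j) //= big1; last first.
  by move=> l lj; rewrite diag_fieldE (negbTE lj) mul0r mulr0.
rewrite (bigD1 k) //= big1; last first.
  by move=> l lk; rewrite diag_fieldE eq_sym (negbTE lk) mul0r mulr0.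
by rewrite !diag_fieldE !eqxx !mul1r !addr0 mulrBr addrA.
Qed.

Section DiagonalCodazzi.
Variables (h a : 'I_n -> 'rV[R]_n -> R) (p : 'rV[R]_n).
Hypothesis h0 : forall k, h k p != 0.
Hypothesis eigen_deriv : forall i j, i != j ->
  2 * h j p * partial i (a j) p = partial i (h j) p * (a i p - a j p).

Let cov i k j := cov_deriv (diag_field h) (diag_field a) i k j p.

Lemma cov_deriv_diag_field_sym_jj i j : i != j -> cov i j j = cov j j i.
Proof.
move=> ij; rewrite /cov !cov_deriv_diag_field !christoffel_diag_field //.
rewrite eqxx (negbTE ij) eq_sym (negbTE ij) subrr !mul0r !mulr0 !addr0 !mul1r.
have -> : partial i (a j) p = partial i (h j) p * (a i p - a j p) / (2 * h j p).
  by rewrite -eigen_deriv // mulrAC divff ?mul1r // mulf_neq0 ?pnatr_eq0.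
by rewrite !add0r subr0; field; rewrite h0.
Qed.

Lemma cov_deriv_diag_field_sym i j k : cov i k j = cov j k i.
Proof.
have [<-//|ij] := eqVneq i j.
have [->|kj] := eqVneq k j; first exact: cov_deriv_diag_field_sym_jj.
have [->|ki] := eqVneq k i.
  by apply/esym/cov_deriv_diag_field_sym_jj; rewrite eq_sym.
rewrite /cov !cov_deriv_diag_field !christoffel_diag_field //.
rewrite !(eq_sym _ k) (eq_sym j i) !(negbTE ij, negbTE kj, negbTE ki).
by rewrite !mulr0n !mul0r !add0r oppr0 !mulr0 !mul0r.
Qed.
End DiagonalCodazzi.

Lemma codazzi_diag_field (U : set 'rV[R]_n) (h a : 'I_n -> 'rV[R]_n -> R) :
  (forall p, U p -> forall k, h k p != 0) ->
  (forall p, U p -> forall i j, i != j ->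
     2 * h j p * partial i (a j) p = partial i (h j) p * (a i p - a j p)) ->
  codazzi_on U (diag_field h) (diag_field a).
Proof.
move=> h0 eigen_deriv; split=> [p _|p Up i j k].
  by rewrite /diag_field tr_diag_mx diag_mx_comm.
exact: cov_deriv_diag_field_sym (h0 p Up) (eigen_deriv p Up) i j k.
Qed.
End DiagonalFields.

Theorem proposition4p1 (R : realType) (lam : R) (mu : 'rV[R]_3 -> R)
    (V U : set 'rV[R]_3) :
  0 < lam ->
  open V -> smooth_on V mu ->
  open U -> connected U -> U `<=` V ->
  (forall p, U p -> mu p != lam) ->
  codazzi_on U (metric4p1 lam mu) (tensor4p1 lam mu).
Proof.
move=> lam_gt0 _ mu_smooth _ _ UV mu_neq.
pose h (i : 'I_3) q := if i == 0 :> nat then (lam - mu q) ^- 2 else lam.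
pose a (i : 'I_3) q := if i == 0 :> nat then mu q else lam.
apply: (@codazzi_diag_field _ _ U h a) => p Up;
  have lam_mu : lam - mu p != 0 by rewrite subr_eq0 eq_sym mu_neq.
- move=> k; rewrite /h; case: ifP => _; last by rewrite gt_eqF.
  by rewrite invr_eq0 expf_neq0.
- move=> i j ij; rewrite /h /a.
  case j0 : (j == 0 :> nat); last by rewrite /partial !derive_cst mulr0 mul0r.
  have -> : (i == 0 :> nat) = false.
    by apply: contraNF ij; rewrite -(eqP j0) => /eqP/val_inj ->.
  rewrite /partial derive_subr_expN2 ?mu_neq //; first by field.
  exact/diff_derivable/(mu_smooth 1%N).1/UV.
Qed.
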